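(* Let $(x_1,y_1),\dots,(x_n,y_n)\in\mathbb{R}^d\times\mathbb{R}$, $X=(x_1,\dots,x_n)$, $Y=(y_1,\dots,y_n)^T$, $\sigma(z)=\max(z,0)$, and $\lambda>0$. Consider the gradient flow on all weights of $f_t(x)=\sum_{j=1}^mw_j(t)\sigma(x^Tu_j(t))$ for the $\ell_2$-regularized empirical risk $$\frac1{2n}\sum_{i=1}^n(y_i-f_t(x_i))^2+\frac{\lambda}{2m}\sum_{j=1}^m\big[w_j(t)^2+\|u_j(t)\|^2\big],$$ i.e. $\frac{dw_j}{dt}=\frac1n\sum_i(y_i-f_t(x_i))\sigma(x_i^Tu_j)-\frac{\lambda}{m}w_j$, $\frac{du_j}{dt}=\frac1n\sum_i(y_i-f_t(x_i))w_j\mathbb{1}_{x_i^Tu_j\ge0}x_i-\frac{\lambda}{m}u_j$. Assume only that $|w_j(0)^2-\|u_j(0)\|^2|<\infty$ for all $1\le j\le m$. Suppose the dynamics reaches a stationarity, with limiting weights $(w_j(\infty),u_j(\infty))$, signed measure $\widehat\rho^\lambda_\infty=\frac1m\sum_{l=1}^m\mathrm{sgn}(w_l(\infty))\delta_{\sqrt m\,u_l(\infty)}$ and adaptive kernel $\widehat H^\lambda_\infty(x,\tilde x)=\int\sigma(x^T\Theta)\sigma(\tilde x^T\Theta)|\widehat\rho^\lambda_\infty|(d\Theta)$. Then the network function at stationarity satisfies, for every $x$, $$\widehat f^{\mathrm{nn},\lambda}_\infty(x)=\widehat H^\lambda_\infty(x,X)\Big[\tfrac nm\lambda\, I_n+\widehat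 H^\lambda_\infty(X,X)\Big]^{-1}Y,$$ where $\widehat H^\lambda_\infty(x,X)\in\mathbb{R}^{1\times n}$ and $\widehat H^\lambda_\infty(X,X)\in\mathbb{R}^{n\times n}$ are the kernel evaluations.
   Context: For a signed measure $\rho=\rho_+-\rho_-$, $|\rho|=\rho_++\rho_-$, so $|\widehat\rho^\lambda_\infty|=\frac1m\sum_l\delta_{\sqrt m u_l(\infty)}$. ''Stationarity'' means the $t\to\infty$ limit of the gradient flow, at which the gradient-flow vector field vanishes. *)

From HB Require Import structures.
From mathcomp Require Import all_boot all_order all_algebra.
From mathcomp Require Import all_classical all_reals all_analysis.
Set Implicit Arguments. Unset Strict Implicit. Unset Printing Implicit Defensive.
Import Order.TTheory GRing.Theory Num.Theory.
Import numFieldNormedType.Exports.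
Local Open Scope ring_scope.

Section Defs.
Variable R : realType.

Definition relu (z : R) : R := Num.max z 0.

Definition dotp (d : nat) (a b : 'I_d -> R) : R := \sum_(k < d) a k * b k.

Definition sqnorm (d : nat) (a : 'I_d -> R) : R := dotp a a.

Definition netf (d m : nat) (w : 'I_m -> R) (u : 'I_m -> 'I_d -> R)
  (x : 'I_d -> R) : R := \sum_(j < m) w j * relu (dotp x (u j)).

Definition resid (d n m : nat) (X : 'I_n -> 'I_d -> R) (Y : 'I_n -> R)
  (w : 'I_m -> R) (u : 'I_m -> 'I_d -> R) (i : 'I_n) : R :=
  Y i - netf w u (X i).

Definition ind_ge0 (z : R) : R := if 0 <= z then 1 else 0.

Definition vf_w (d n m : nat) (X : 'I_n -> 'I_d -> R) (Y : 'I_n -> R) (lam : R)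
  (w : 'I_m -> R) (u : 'I_m -> 'I_d -> R) (j : 'I_m) : R :=
  n%:R^-1 * (\sum_(i < n) resid X Y w u i * relu (dotp (X i) (u j)))
  - lam / m%:R * w j.

Definition vf_u (d n m : nat) (X : 'I_n -> 'I_d -> R) (Y : 'I_n -> R) (lam : R)
  (w : 'I_m -> R) (u : 'I_m -> 'I_d -> R) (j : 'I_m) (k : 'I_d) : R :=
  n%:R^-1 * (\sum_(i < n) resid X Y w u i * w j * ind_ge0 (dotp (X i) (u j)) * X i k)
  - lam / m%:R * u j k.

(* Integral of a function g against the total-variation measure
   |rho| = 1/m sum_l delta_{sqrt m u_l} (a finite sum of Dirac masses). *)
Definition int_absrho (d m : nat) (u : 'I_m -> 'I_d -> R) (g : ('I_d -> R) -> R) : R :=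
  m%:R^-1 * \sum_(l < m) g (fun k => Num.sqrt m%:R * u l k).

Definition Hker (d m : nat) (u : 'I_m -> 'I_d -> R) (x xt : 'I_d -> R) : R :=
  int_absrho u (fun th => relu (dotp x th) * relu (dotp xt th)).

Definition HxX (d n m : nat) (u : 'I_m -> 'I_d -> R) (X : 'I_n -> 'I_d -> R)
  (x : 'I_d -> R) : 'rV[R]_n := \row_(i < n) Hker u x (X i).
Definition HXX (d n m : nat) (u : 'I_m -> 'I_d -> R) (X : 'I_n -> 'I_d -> R)
  : 'M[R]_n := \matrix_(i < n, i' < n) Hker u (X i) (X i').

End Defs.

From HB Require Import structures.
From mathcomp Require Import all_boot all_order all_algebra.
From mathcomp Require Import all_classical all_reals all_analysis.
From mathcomp Require Import ring.
Set Implicit Arguments. Unset Strict Implicit. Unset Printing Implicit Defensive.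
Import Order.TTheory GRing.Theory Num.Theory.
Import numFieldNormedType.Exports.
Local Open Scope classical_set_scope.
Local Open Scope ring_scope.

(** The ReLU is positively homogeneous, so rescaling the atoms of
    [|rho|] by [sqrt m] exactly cancels the weight [1/m]: the kernel is the
    Gram kernel [H = S S^T] of the feature matrix [S_il = sigma(x_i^T u_l)].
    Only the stationarity of the outer weights is needed: it says
    [S^T (Y - S w) = k w] with [k = n lambda / m], i.e. [w] minimises the
    ridge objective [|Y - S w|^2 + k |w|^2].  Hence
    [(k I + S S^T)(Y - S w) = k Y], and
    [S^T (k I + S S^T)^-1 Y = k^-1 S^T (Y - S w) = w], which is the claimed
    representation [f(x) = s(x) w = H(x, X) (k I + H(X, X))^-1 Y]. *)

Section RegularizedGram.
Variable R : realFieldType.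

Lemma mulmx_trmx_row p (z : 'rV[R]_p) : (z *m z^T) 0 0 = \sum_j z 0 j ^+ 2.
Proof. by rewrite mxE; apply: eq_bigr => j _; rewrite mxE expr2. Qed.

Lemma mulmx_trmx_row_ge0 p (z : 'rV[R]_p) : 0 <= (z *m z^T) 0 0.
Proof. by rewrite mulmx_trmx_row; apply: sumr_ge0 => j _; apply: sqr_ge0. Qed.

Lemma mulmx_trmx_row_eq0 p (z : 'rV[R]_p) : ((z *m z^T) 0 0 == 0) = (z == 0).
Proof.
apply/idP/eqP => [|->]; last by rewrite mul0mx mxE.
rewrite mulmx_trmx_row psumr_eq0 => [/allP z0|j _]; last exact: sqr_ge0.
apply/rowP => j; rewrite mxE; apply/eqP.
by rewrite -sqrf_eq0; apply: z0; rewrite mem_index_enum.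
Qed.

Lemma unitmx_scalar_addGram p q (S : 'M[R]_(p, q)) (k : R) :
  0 < k -> k%:M + S *m S^T \in unitmx.
Proof.
move=> k_gt0; set A := _ + _.
rewrite -row_free_unit -kermx_eq0; apply/eqP/row_matrixP => i; rewrite row0.
set v := row i (kermx A).
have vA0 : v *m A = 0 by rewrite -row_mul mulmx_ker row0.
have vAv : (v *m A *m v^T) 0 0 = k * (v *m v^T) 0 0 + (v *m S *m (v *m S)^T) 0 0.
  rewrite /A mulmxDr mul_mx_scalar mulmxDl -scalemxAl trmx_mul !mulmxA.
  by rewrite mxE [in LHS]mxE.
move: vAv; rewrite vA0 mul0mx mxE => /esym/eqP.
rewrite paddr_eq0 ?mulr_ge0 ?mulmx_trmx_row_ge0 ?ltW //.
by rewrite mulf_eq0 gt_eqF //= mulmx_trmx_row_eq0 => /andP[/eqP].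
Qed.

Lemma ridge_representer p q (S : 'M[R]_(p, q)) (y : 'cV[R]_p) (w : 'cV[R]_q)
    (k : R) :
  0 < k -> S^T *m (y - S *m w) = k *: w ->
  S^T *m (invmx (k%:M + S *m S^T) *m y) = w.
Proof.
move=> k_gt0 normal_eq; set A := _ + _.
have k_neq0 : k != 0 by rewrite gt_eqF.
have A_resid : A *m (y - S *m w) = k *: y.
  by rewrite mulmxDl mul_scalar_mx -mulmxA normal_eq -scalemxAr -scalerDr subrK.
have invA_y : invmx A *m y = k^-1 *: (y - S *m w).
  apply: (can_inj (scalerK k_neq0)).
  rewrite scalerA divff // scale1r scalemxAr -A_resid mulmxA.
  by rewrite mulVmx ?mul1mx ?unitmx_scalar_addGram.
by rewrite invA_y -scalemxAr normal_eq scalerA mulVf // scale1r.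
Qed.

End RegularizedGram.

Section ReluFeatures.
Variable R : realType.

Lemma relu_pM (a z : R) : 0 <= a -> relu (a * z) = a * relu z.
Proof. by move=> a_ge0; rewrite /relu maxr_pMr // mulr0. Qed.

Lemma dotpZr d (a : R) (x v : 'I_d -> R) :
  dotp x (fun k => a * v k) = a * dotp x v.
Proof. by rewrite /dotp mulr_sumr; apply: eq_bigr => k _; rewrite mulrCA. Qed.

Definition features d n m (X : 'I_n -> 'I_d -> R) (u : 'I_m -> 'I_d -> R) :
  'M[R]_(n, m) := \matrix_(i, l) relu (dotp (X i) (u l)).

Lemma Hker_sum d m (u : 'I_m -> 'I_d -> R) (x y : 'I_d -> R) :
  Hker u x y = \sum_l relu (dotp x (u l)) * relu (dotp y (u l)).
Proof.
rewrite /Hker /int_absrho mulr_sumr; apply: eq_bigr => l _.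
rewrite !dotpZr !relu_pM ?sqrtr_ge0 // mulrACA -expr2 sqr_sqrtr ?ler0n //.
by rewrite mulKf // pnatr_eq0 gtn_eqF // (leq_ltn_trans _ (ltn_ord l)).
Qed.

Lemma HXX_gram d n m (u : 'I_m -> 'I_d -> R) (X : 'I_n -> 'I_d -> R) :
  HXX u X = features X u *m (features X u)^T.
Proof.
apply/matrixP => i i'; rewrite !mxE Hker_sum.
by apply: eq_bigr => l _; rewrite !mxE.
Qed.

Lemma HxX_gram d n m (u : 'I_m -> 'I_d -> R) (X : 'I_n -> 'I_d -> R) x :
  HxX u X x = features (fun=> x) u *m (features X u)^T.
Proof.
apply/rowP => i; rewrite !mxE Hker_sum.
by apply: eq_bigr => l _; rewrite !mxE.
Qed.

Lemma netf_features d m (w : 'I_m -> R) (u : 'I_m -> 'I_d -> R) x :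
  netf w u x = (features (fun _ : 'I_1 => x) u *m \col_j w j) 0 0.
Proof. by rewrite /netf mxE; apply: eq_bigr => j _; rewrite !mxE mulrC. Qed.

Lemma resid_features d n m (X : 'I_n -> 'I_d -> R) Y (w : 'I_m -> R) u :
  \col_i resid X Y w u i = \col_i Y i - features X u *m \col_j w j.
Proof.
apply/colP => i; rewrite !mxE /resid netf_features mxE.
by congr (_ - _); apply: eq_bigr => j _; rewrite !mxE.
Qed.

Lemma vf_w_eq0_normal d n m (X : 'I_n -> 'I_d -> R) Y lam (w : 'I_m -> R) u :
  (forall j, vf_w X Y lam w u j = 0) ->
  (features X u)^T *m (\col_i Y i - features X u *m \col_j w j)
    = (n%:R / m%:R * lam) *: \col_j w j.
Proof.
move=> stat; apply/colP => j; rewrite -resid_features !mxE.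
have /eqP := stat j; rewrite /vf_w subr_eq0 => /eqP stat_j.
case: (posnP n) => [n0|n_gt0].
  by subst n; rewrite !big_ord0 !mul0r.
have n_neq0 : (n%:R : R) != 0 by rewrite pnatr_eq0 -lt0n.
rewrite -[LHS](mulVKf n_neq0); under eq_bigr do rewrite !mxE mulrC.
by rewrite stat_j; ring.
Qed.

Lemma vf_w_nil d m (X : 'I_0 -> 'I_d -> R) Y lam (w : 'I_m -> R) u j :
  0 < lam -> vf_w X Y lam w u j = 0 -> w j = 0.
Proof.
move=> lam_gt0; rewrite /vf_w big_ord0 mulr0 sub0r => /eqP.
have m_neq0 : (m%:R : R) != 0.
  by rewrite pnatr_eq0 gtn_eqF // (leq_ltn_trans _ (ltn_ord j)).
have c_neq0 : lam / m%:R != 0 by rewrite mulf_neq0 ?invr_neq0 // gt_eqF.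
by rewrite oppr_eq0 mulf_eq0 (negbTE c_neq0) => /eqP.
Qed.

End ReluFeatures.

Theorem proposition1 (R : realType) (d n m : nat)
  (X : 'I_n -> 'I_d -> R) (Y : 'I_n -> R) (lam : R) (hlam : 0 < lam)
  (w : 'I_m -> R -> R) (u : 'I_m -> 'I_d -> R -> R)
  (winf : 'I_m -> R) (uinf : 'I_m -> 'I_d -> R)
  (* gradient flow for t > 0 *)
  (hflow_w : forall (t : R) (j : 'I_m), 0 < t ->
     is_derive t 1 (w j) (vf_w X Y lam (fun j' => w j' t) (fun j' k => u j' k t) j))
  (hflow_u : forall (t : R) (j : 'I_m) (k : 'I_d), 0 < t ->
     is_derive t 1 (u j k) (vf_u X Y lam (fun j' => w j' t) (fun j' k' => u j' k' t) j k))
  (* initial condition: |w_j(0)^2 - ||u_j(0)||^2| < oo (automatic for real weights) *)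
  (hinit : forall j : 'I_m, ((`| w j 0 ^+ 2 - sqnorm (fun k => u j k 0) |)%:E < +oo)%E)
  (* the limiting weights *)
  (hlim_w : forall j : 'I_m, w j t @[t --> +oo] --> winf j)
  (hlim_u : forall (j : 'I_m) (k : 'I_d), u j k t @[t --> +oo] --> uinf j k)
  (* stationarity: the gradient-flow vector field vanishes at the limit *)
  (hstat_w : forall j : 'I_m, vf_w X Y lam winf uinf j = 0)
  (hstat_u : forall (j : 'I_m) (k : 'I_d), vf_u X Y lam winf uinf j k = 0) :
  forall x : 'I_d -> R,
    netf winf uinf x =
    (HxX uinf X x *m invmx ((n%:R / m%:R * lam)%:M + HXX uinf X)
       *m \col_(i < n) Y i) 0 0.
Proof.
move=> x; rewrite netf_features HxX_gram HXX_gram.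
set S := features X uinf; set W := \col_j winf j.
case: (posnP m) => [m0|m_gt0].
  by subst m; rewrite [features _ _]thinmx0 !mul0mx mxE.
case: (posnP n) => [n0|n_gt0].
  subst n; rewrite [_ *m S^T]thinmx0 !mul0mx (_ : W = 0) ?mulmx0 ?mxE //.
  by apply/colP => j; rewrite !mxE (vf_w_nil hlam (hstat_w j)).
have k_gt0 : 0 < n%:R / m%:R * lam by rewrite !mulr_gt0 ?invr_gt0 ?ltr0n.
by rewrite -!mulmxA (ridge_representer k_gt0 (vf_w_eq0_normal hstat_w)).
Qed.
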